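(* Let $R$ be an Armendariz ring. Then the polynomial ring $R[x]$ is a generalized right Baer ring if and only if $R$ is a generalized right Baer ring.
   Context: All rings are associative with identity. For a nonempty subset $X$ of a ring $R$, $r_R(X)=\{a\in R : xa=0 \text{ for all } x\in X\}$, and for a positive integer $n$, $X^n$ denotes the set of all products $a_1\cdots a_n$ with $a_i\in X$. A ring $R$ is generalized right Baer if for every nonempty subset $X$ of $R$ there exist a positive integer $n$ (depending on $X$) and an idempotent $e\in R$ with $r_R(X^n)=eR$. A ring $R$ is Armendariz if whenever polynomials $f(x)=\sum_{i=0}^m a_ix^i$ and $g(x)=\sum_{j=0}^n b_jx^j$ in $R[x]$ satisfy $f(x)g(x)=0$, then $a_ib_j=0$ for all $i,j$. *)

From mathcomp Require Import all_boot all_algebra.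
Set Implicit Arguments. Unset Strict Implicit. Unset Printing Implicit Defensive.
Import GRing.Theory.
Local Open Scope ring_scope.

Definition right_ann (R : nzRingType) (X : R -> Prop) : R -> Prop :=
  fun a => forall x, X x -> x * a = 0.

Definition set_pow (R : nzRingType) (X : R -> Prop) (n : nat) : R -> Prop :=
  fun y => exists s : seq R,
    [/\ size s = n, (forall a, a \in s -> X a) & y = \prod_(a <- s) a].

Definition gen_right_Baer (R : nzRingType) : Prop :=
  forall X : R -> Prop, (exists x, X x) ->
    exists n : nat, (0 < n)%N /\
      exists e : R, e * e = e /\
        forall a, right_ann (set_pow X n) a <-> exists b, a = e * b.

Definition armendariz (R : nzRingType) : Prop :=
  forall f g : {poly R}, f * g = 0 -> forall i j : nat, f`_i * g`_j = 0.

From mathcomp Require Import all_boot all_algebra.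
Set Implicit Arguments. Unset Strict Implicit. Unset Printing Implicit Defensive.
Import GRing.Theory.
Local Open Scope ring_scope.

(* Over an Armendariz ring, a product f_1 ... f_n of polynomials kills g exactly
   when every product of coefficients a_1 ... a_n (a_k a coefficient of f_k) kills
   every coefficient of g.  Hence for a set Y of polynomials with coefficient set
   C, the right annihilator of Y^n in R[x] consists of the polynomials whose
   coefficients lie in the right annihilator of C^n, and an idempotent e with
   r_R(C^n) = eR yields r_{R[x]}(Y^n) = e R[x].  Conversely, for X in R the
   annihilator of the constants X^n in R[x] is generated by an idempotent E, and
   its constant coefficient generates r_R(X^n). *)

Lemma seq_preimage (T U : eqType) (f : T -> U) (X : T -> Prop) (s : seq U) :
  (forall y, y \in s -> exists2 x, X x & y = f x) ->
  exists2 t, (forall x, x \in t -> X x) & s = map f t.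
Proof.
elim: s => [|y s IH] sX; first by exists [::].
have [x Xx ->] := sX y (mem_head y s).
have [|t tX ->] := IH; first by move=> z zs; apply: sX; rewrite inE zs orbT.
by exists (x :: t) => // z; rewrite inE => /predU1P [->|/tX].
Qed.

Lemma set_pow_rmorph (R S : nzRingType) (f : {rmorphism R -> S})
    (X : R -> Prop) (n : nat) (y : S) :
  set_pow (fun z => exists2 x, X x & z = f x) n y <->
  exists2 a, set_pow X n a & y = f a.
Proof.
split.
- move=> [s [sz sX ->]]; have [t tX st] := seq_preimage sX; subst s.
  exists (\prod_(a <- t) a); last by rewrite rmorph_prod big_map.
  by exists t; rewrite size_map in sz.
- move=> [_ [t [sz tX ->]] ->]; exists (map f t); split.
  + by rewrite size_map.
  + by move=> _ /mapP [x xt ->]; exists x; first exact: tX.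
  + by rewrite rmorph_prod big_map.
Qed.

Section PolyAnnihilators.
Variable R : nzRingType.

Lemma mul_polyC_eq0 (p : {poly R}) (c : R) :
  (forall k, p`_k * c = 0) -> p * c%:P = 0.
Proof. by move=> pc0; apply/polyP => k; rewrite coefMC pc0 coef0. Qed.

Lemma polyC_idem_mulP (e : R) (g : {poly R}) : e * e = e ->
  (exists h, g = e%:P * h) <-> (forall j, exists b, g`_j = e * b).
Proof.
move=> ee; split=> [[h ->] j|ge]; first by exists h`_j; rewrite coefCM.
exists g; apply/polyP => j; rewrite coefCM.
by have [b ->] := ge j; rewrite mulrA ee.
Qed.

Lemma right_ann_set_pow_polyC (X : R -> Prop) (n : nat) (g : {poly R}) :
  right_ann (set_pow (fun f => exists2 a, X a & f = a%:P) n) g <->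
  (forall j, right_ann (set_pow X n) g`_j).
Proof.
split=> [gY j a Xa | gX _ /set_pow_rmorph [a Xa ->]].
- have /(congr1 (coefp j)) : a%:P * g = 0 by apply/gY/set_pow_rmorph; exists a.
  by rewrite /= coefCM coef0.
- by apply/polyP => j; rewrite coefCM coef0; apply: gX.
Qed.

Fixpoint coef_choice (s : seq R) (fs : seq {poly R}) : Prop :=
  match s, fs with
  | [::], [::] => True
  | a :: s', f :: fs' => (exists i, a = f`_i) /\ coef_choice s' fs'
  | _, _ => False
  end.

Lemma coef_choice_size s fs : coef_choice s fs -> size s = size fs.
Proof. by elim: s fs => [|a s IH] [|f fs] //= [_ /IH ->]. Qed.

Lemma coef_choice_rcons s fs f :
  coef_choice s (rcons fs f) <->
  exists s' i, s = rcons s' f`_i /\ coef_choice s' fs.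
Proof.
elim: fs s => [|g fs IH] [|a s] /=.
- by split=> // [[s' [i [e _]]]]; case: s' e.
- split=> [[[i ->] cs] | [s' [i [e cs']]]].
  + by case: s cs => // _; exists [::], i.
  + by case: s' e cs' => [|b s'] [-> ->] //; split; first exists i.
- by split=> // [[s' [i [e _]]]]; case: s' e.
- split=> [[ga /IH [s' [i [-> cs']]]] | [s' [i [e cs']]]].
  + by exists (a :: s'), i.
  + case: s' e cs' => [|b s'] [-> ->] // [gb cs'].
    by split=> //; apply/IH; exists s', i.
Qed.

Lemma coef_choice_mem s fs a : coef_choice s fs -> a \in s ->
  exists2 f, f \in fs & exists i, a = f`_i.
Proof.
elim: s fs => [|b s IH] [|f fs] //= [fb cs]; rewrite inE => /predU1P [->|a_s].
- by exists f; first exact: mem_head.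
- by have [g gfs ga] := IH _ cs a_s; exists g; rewrite // inE gfs orbT.
Qed.

Lemma coef_choice_exists (Y : {poly R} -> Prop) s :
  (forall a, a \in s -> exists f i, Y f /\ a = f`_i) ->
  exists fs, coef_choice s fs /\ forall f, f \in fs -> Y f.
Proof.
elim: s => [|a s IH] sY; first by exists [::].
have [f [i [Yf ->]]] := sY a (mem_head a s).
have [|fs [cs fsY]] := IH; first by move=> b bs; apply: sY; rewrite inE bs orbT.
exists (f :: fs); split; first by split; first exists i.
by move=> h; rewrite inE => /predU1P [->|/fsY].
Qed.

Lemma prod_mul_eq0_coef_choice fs (g : {poly R}) :
  (forall s, coef_choice s fs -> forall j, (\prod_(a <- s) a) * g`_j = 0) ->
  (\prod_(f <- fs) f) * g = 0.
Proof.
elim/last_ind: fs g => [|fs f IH] g sg.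
  have := sg [::] I; rewrite big_nil => g0.
  by apply/polyP => j; rewrite big_nil mul1r coef0 -[g`_j]mul1r g0.
rewrite big_rcons /= -mulrA; apply: IH => s cs k.
rewrite coefM mulr_sumr big1 // => i _.
have := sg (rcons s f`_i) _ (k - i)%N; rewrite big_rcons /= -mulrA; apply.
by apply/coef_choice_rcons; exists s, i.
Qed.

Lemma armendariz_coef_choice_mul_eq0 fs (g : {poly R}) : armendariz R ->
  (\prod_(f <- fs) f) * g = 0 ->
  forall s, coef_choice s fs -> forall j, (\prod_(a <- s) a) * g`_j = 0.
Proof.
move=> armR; elim/last_ind: fs g => [|fs f IH] g fg s.
  rewrite big_nil mul1r in fg.
  by case: s => // _ j; rewrite big_nil mul1r fg coef0.
move=> /coef_choice_rcons [s' [i [-> cs']]] j.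
rewrite big_rcons /= in fg.
have fgj : (\prod_(h <- fs) h) * (f * (g`_j)%:P) = 0.
  by rewrite mulrA; apply: mul_polyC_eq0 => k; apply: (armR _ _ fg).
have fgij : (\prod_(h <- fs) h) * (f`_i * g`_j)%:P = 0.
  by apply: mul_polyC_eq0 => k; have := armR _ _ fgj k i; rewrite coefMC.
by have := IH _ fgij _ cs' 0%N; rewrite coefC big_rcons /= mulrA.
Qed.

Definition coef_set (Y : {poly R} -> Prop) : R -> Prop :=
  fun a => exists f i, Y f /\ a = f`_i.

Lemma set_pow_coef_setP (Y : {poly R} -> Prop) n a :
  set_pow (coef_set Y) n a <->
  exists s fs, [/\ coef_choice s fs, size fs = n,
                   forall f, f \in fs -> Y f & a = \prod_(b <- s) b].
Proof.
split=> [[s [sz sY ->]]|[s [fs [cs sz fsY ->]]]].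
- have [fs [cs fsY]] := coef_choice_exists sY.
  by exists s, fs; split; rewrite -?(coef_choice_size cs).
- exists s; split; first by rewrite (coef_choice_size cs).
  + by move=> b /(coef_choice_mem cs) [f /fsY Yf [i ->]]; exists f, i.
  + by [].
Qed.

Lemma right_ann_set_pow_coef_set (Y : {poly R} -> Prop) n (g : {poly R}) :
  armendariz R ->
  right_ann (set_pow Y n) g <->
  (forall j, right_ann (set_pow (coef_set Y) n) g`_j).
Proof.
move=> armR; split=> [gY j _ /set_pow_coef_setP [s [fs [cs sz fsY ->]]]
                     | gC _ [fs [sz fsY ->]]].
- by apply: armendariz_coef_choice_mul_eq0 cs j => //; apply: gY; exists fs.
- apply: prod_mul_eq0_coef_choice => s cs j; apply: gC.
  by apply/set_pow_coef_setP; exists s, fs.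
Qed.

End PolyAnnihilators.

Lemma gen_right_Baer_poly (R : nzRingType) :
  armendariz R -> gen_right_Baer R -> gen_right_Baer {poly R}.
Proof.
move=> armR baerR Y [y Yy].
have [|n [n_gt0 [e [ee annC]]]] := baerR (coef_set Y); first by exists y`_0, y, 0%N.
exists n; split=> //; exists e%:P; split; first by rewrite -polyCM ee.
move=> g; split=> [/(right_ann_set_pow_coef_set _ _ _ armR) gC
                  | /(polyC_idem_mulP _ ee) gE].
- by apply/(polyC_idem_mulP _ ee) => j; apply/annC/gC.
- by apply/(right_ann_set_pow_coef_set _ _ _ armR) => j; apply/annC/gE.
Qed.

Lemma gen_right_Baer_of_poly (R : nzRingType) :
  gen_right_Baer {poly R} -> gen_right_Baer R.
Proof.
move=> baerP X [x Xx].
pose Y f := exists2 a, X a & f = a%:P.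
have [|n [n_gt0 [E [EE annY]]]] := baerP Y; first by exists x%:P, x.
have annE j : right_ann (set_pow X n) E`_j.
  by move: j; apply/right_ann_set_pow_polyC/annY; exists 1; rewrite mulr1.
exists n; split=> //; exists E`_0; split; first by rewrite -coef0M EE.
move=> a; split=> [aX | [b ->] p Xp]; last by rewrite mulrA annE ?mul0r.
have [h ah] : exists h, a%:P = E * h.
  apply/annY/right_ann_set_pow_polyC => j; rewrite coefC.
  by case: eqP => // _ p _; rewrite mulr0.
by exists h`_0; rewrite -coef0M -ah coefC.
Qed.

Theorem corollary3p12 (R : nzRingType) :
  armendariz R -> (gen_right_Baer {poly R} <-> gen_right_Baer R).
Proof.
move=> armR; split; [exact: gen_right_Baer_of_poly | exact: gen_right_Baer_poly].
Qed.
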